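(* Fix $n$. No two non-isomorphic graphs in $\mathbb{K}^{n_{1},n_{2},\ldots,n_{k}}_{n}=\{K^{n_{1},\ldots,n_{k}}_{n}\mid k\ge2,\ n_i\ge1,\ \sum_{i=1}^{k}n_{i}+1=n\}$ are $D$-cospectral.
   Context: Two connected graphs are $D$-cospectral if their distance matrices have the same spectrum. $K^{n_{1},\ldots,n_{k}}_{n}$ denotes the graph on $n$ vertices having a vertex $v$ of degree $n-1$ such that $G-v$ is the disjoint union of complete graphs $K_{n_1},\dots,K_{n_k}$. *)

From HB Require Import structures.
From mathcomp Require Import all_boot all_order all_algebra all_field.
From mathcomp Require Import algC.
Set Implicit Arguments. Unset Strict Implicit. Unset Printing Implicit Defensive.
Import Order.TTheory GRing.Theory Num.Theory.

Fixpoint walk_within (T : finType) (e : rel T) (k : nat) (u v : T) : bool :=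
  if k is k'.+1 then
    walk_within e k' u v || [exists w, walk_within e k' u w && e w v]
  else u == v.

(* Since walk_within is monotone in k, it equals the number of k < #|T|
   for which no such walk exists (correct for connected graphs, where
   every distance is < #|T|). *)
Definition gdist (T : finType) (e : rel T) (u v : T) : nat :=
  count (fun k => ~~ walk_within e k u v) (iota 0 #|T|).

Definition dist_mx (n : nat) (e : rel 'I_n) : 'M[algC]_n :=
  \matrix_(i, j) ((gdist e i j)%:R)%R.

(* D-cospectral: the distance matrices have the same spectrum, i.e. the same
   characteristic polynomial (spectrum counted with multiplicity). *)
Definition D_cospectral (n : nat) (e1 e2 : rel 'I_n) : Prop :=
  char_poly (dist_mx e1) = char_poly (dist_mx e2).

Definition graph_iso (T1 T2 : finType) (e1 : rel T1) (e2 : rel T2) : Prop :=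
  exists f : T1 -> T2, bijective f /\ forall u v, e1 u v = e2 (f u) (f v).

(* The graph K_n^{n_1,...,n_k} for s = [:: n_1; ...; n_k] on vertices 'I_n:
   vertex 0 is the dominating vertex, vertices 1..n_1 form the first clique,
   the next n_2 vertices the second clique, etc.  block s v = number of
   blocks lying entirely before vertex v. *)
Definition block (s : seq nat) (v : nat) : nat :=
  count (fun j => sumn (take j.+1 s) < v) (iota 0 (size s)).

Definition Kgraph (n : nat) (s : seq nat) : rel 'I_n :=
  fun u v => (u != v) &&
    [|| val u == 0, val v == 0 | block s (val u) == block s (val v)].

Definition valid_parts (n : nat) (s : seq nat) : Prop :=
  [/\ 2 <= size s, all (fun x => 0 < x) s & sumn s + 1 = n].
Arguments Kgraph : clear implicits.

(* Let k be the number of cliques.  Label the dominating vertex 0 and the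
   vertices of the i-th clique i.  With R the n x (k+1) vertex-label incidence
   matrix, D + I = R K R^T where K has entry 2 between two distinct
   nonzero labels and 1 elsewhere, and R^T R = diag (1, n_1, ..., n_k).  By
   Sylvester's identity det (x - D) = (x+1)^(n-k-1) det ((x+1) - K R^T R), and as K
   is a rank-two perturbation of a diagonal matrix this gives
     char_poly D = (X+1)^(n-k-1) L_k(q),  q = prod_i (X + 1 + n_i),
     L_k(q) = X q - (2X+1) (k q - (X+1) q').
   Since L_k(q)(-1) = (k-1) q(-1) <> 0, the spectrum determines k; L_k is linear
   and multiplies the leading coefficient of q by the odd integer
   2 deg q + 1 - 2k, hence injective, so the spectrum determines q and therefore
   the multiset of the n_i, which determines the graph up to isomorphism. *)

From mathcomp Require Import all_boot all_order all_algebra all_field algC.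
From mathcomp Require Import perm fingroup ring zify.
Set Implicit Arguments. Unset Strict Implicit. Unset Printing Implicit Defensive.
Import Order.TTheory GRing.Theory Num.Theory.

Section DominatingVertex.
Variables (T : finType) (e : rel T) (z : T).
Hypothesis z_dominating : forall v, v != z -> e z v && e v z.

Lemma walk_withinS k u v :
  walk_within e k.+1 u v = walk_within e k u v || [exists w, walk_within e k u w && e w v].
Proof. by []. Qed.

Lemma walk_within1 u v : walk_within e 1 u v = (u == v) || e u v.
Proof.
rewrite walk_withinS; congr orb; apply/existsP/idP => [[w /andP [/eqP -> //]]|uv].
by exists u; rewrite /= eqxx.
Qed.

Lemma walk_within_dominating k u v : walk_within e k.+2 u v.
Proof.
elim: k => [|k IH]; last by rewrite walk_withinS IH.
rewrite walk_withinS walk_within1; apply/orP.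
have [<-|uv] := eqVneq u v; first by left.
right; apply/existsP.
have [vz|v_z] := eqVneq v z.
  by rewrite vz in uv *; exists u; rewrite walk_within1 eqxx; case/andP: (z_dominating uv).
exists z; rewrite walk_within1; case/andP: (z_dominating v_z) => -> _; rewrite andbT.
have [->|u_z] := eqVneq u z; first by [].
by case/andP: (z_dominating u_z) => _ ->; rewrite orbT.
Qed.

Lemma gdist_dominating u v : 1 < #|T| ->
  gdist e u v = if u == v then 0 else if e u v then 1 else 2.
Proof.
move=> T_gt1; rewrite /gdist -(subnKC T_gt1) iotaD count_cat /= -(walk_withinS 0) walk_within1.
rewrite (eq_in_count (a2 := pred0)) ?count_pred0; last first.
  by move=> k; rewrite mem_iota => /andP [k_ge2 _] /=; rewrite -(subnKC k_ge2) walk_within_dominating.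
by case: (u == v); case: (e u v).
Qed.

End DominatingVertex.

Lemma block_cons a l v : block (a :: l) v = if a < v then (block l (v - a)).+1 else 0.
Proof.
rewrite /block /= -[1]/(1 + 0) iotaDl count_map take0 addn0.
case: ltnP => av.
  by rewrite add1n; congr S; apply: eq_count => j /=; rewrite ltn_subRL.
apply/eqP; rewrite -leqn0 leqNgt -has_count; apply/hasP => -[j _ /=]; lia.
Qed.

Lemma count_block l j : count (fun v => block l v == j) (iota 1 (sumn l)) = nth 0 l j.
Proof.
elim: l j => [|a l IH] j /=; first by case: j.
rewrite iotaD count_cat addnC (addnC 1 a) iotaDl count_map.
rewrite (eq_in_count (s := iota 1 a) (a2 := fun _ => j == 0)); last first.
  by move=> v; rewrite mem_iota block_cons => /andP [_ va]; rewrite ltnNge -ltnS va eq_sym.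
rewrite (eq_in_count (s := iota 1 (sumn l)) (a2 := fun w => (block l w).+1 == j)); last first.
  by move=> w; rewrite mem_iota /= block_cons => /andP [w_gt0 _]; rewrite ifT ?addKn //; lia.
case: j => [|j] /=; last by rewrite count_pred0 addn0 -IH.
by rewrite count_predT size_iota (eq_count (a2 := pred0)) // count_pred0.
Qed.

Lemma block_lt l v : 0 < v <= sumn l -> block l v < size l.
Proof.
elim: l v => [|a l IH] v /=; first by lia.
by rewrite block_cons => v_range; case: ifP => // av; rewrite ltnS IH //; lia.
Qed.

Lemma size_le_sumn s : all (fun x => 0 < x) s -> size s <= sumn s.
Proof. by elim: s => //= a s IH /andP [a_gt0 /IH]; lia. Qed.

Definition part_label (s : seq nat) (v : nat) : nat :=
  if v == 0 then 0 else (block s v).+1.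

Lemma part_label_le s v : v <= sumn s -> part_label s v <= size s.
Proof. by rewrite /part_label; case: eqP => // v_neq0 v_le; apply: block_lt; lia. Qed.

Lemma count_enum (T : finType) (P : pred T) : count P (enum T) = #|P|.
Proof. by rewrite enumT cardE /enum_mem size_filter. Qed.

Lemma card_ord_pred n (P : pred nat) : #|[pred u : 'I_n | P u]| = count P (iota 0 n).
Proof. by rewrite -val_enum_ord count_map count_enum. Qed.

Lemma card_part_label n s c : sumn s + 1 = n ->
  #|[pred u : 'I_n | part_label s u == c]| = if c is j.+1 then nth 0 s j else 1.
Proof.
move=> <-; rewrite (card_ord_pred _ (fun v => part_label s v == c)) addn1 /= {1}/part_label eqxx.
rewrite (eq_in_count (a2 := fun v => (block s v).+1 == c)); last first.
  by move=> v; rewrite mem_iota /part_label => /andP [v_gt0 _]; rewrite ifN // -lt0n.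
case: c => [|j] /=; last by rewrite count_block.
by rewrite (eq_count (a2 := pred0)) // count_pred0.
Qed.

Definition label_graph (T : finType) (L : T -> nat) : rel T :=
  fun u v => (u != v) && [|| L u == 0, L v == 0 | L u == L v].

Lemma Kgraph_label n s : Kgraph n s =2 label_graph (fun u : 'I_n => part_label s u).
Proof.
by move=> u v; rewrite /Kgraph /label_graph /part_label; case: (val u == 0); case: (val v == 0).
Qed.

Definition label_ord n s (u : 'I_n) : 'I_(size s).+1 := inord (part_label s u).

Lemma label_ordE n s (u : 'I_n) : sumn s + 1 = n -> val (label_ord s u) = part_label s u.
Proof.
move=> sn; apply: inordK; rewrite ltnS part_label_le //.
by rewrite -ltnS -[(sumn s).+1]addn1 sn.
Qed.

Lemma label_graph_iso n (L1 L2 : 'I_n -> nat) (pi : nat -> nat) :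
  bijective pi -> pi 0 = 0 ->
  (forall c, #|[pred u | L1 u == c]| = #|[pred u | L2 u == pi c]|) ->
  graph_iso (label_graph L1) (label_graph L2).
Proof.
move=> [pinv piK pinvK] pi0 cardL.
have pi_eq c d : (pi c == pi d) = (c == d) by apply: inj_eq; apply: can_inj piK.
have pi_eq0 c : (pi c == 0) = (c == 0) by rewrite -{1}pi0 pi_eq.
have /tuple_permP [p Ep] : perm_eq [tuple pi (L1 u) | u < n] [tuple L2 u | u < n].
  apply/allP => c _; apply/eqP; rewrite /= !count_map -enumT !count_enum.
  rewrite -[c in RHS]pinvK -cardL; apply: eq_card => u.
  by rewrite !inE -{1}[c]pinvK pi_eq.
have Lp u : L2 (p u) = pi (L1 u).
  by have := congr1 (fun l => nth 0 l u) Ep; rewrite !nth_mktuple tnth_mktuple.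
exists p; split; first by exists p^-1%g => u; rewrite ?permK ?permKV.
by move=> u v; rewrite /label_graph !Lp (inj_eq perm_inj) !pi_eq0 pi_eq.
Qed.

Lemma perm_eq_nth_bij (T : eqType) (x0 : T) (s t : seq T) : perm_eq s t ->
  exists2 f : nat -> nat, bijective f & forall j, nth x0 s j = nth x0 t (f j).
Proof.
move=> st; have tk : size t == size s by rewrite (perm_size st).
have /tuple_permP [p Ep] : perm_eq s (Tuple tk) by [].
pose f (q : 'S_(size s)) j := if insub j is Some i then val (q i) else j.
have fK (q : 'S_(size s)) : cancel (f q) (f q^-1%g).
  move=> j; rewrite {2}/f; case: insubP => [i _ <-|j_ge]; rewrite /f.
    by rewrite valK permK.
  by rewrite insubN.
exists (f p); first by exists (f p^-1%g); last by rewrite -{2}(invgK p).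
move=> j; rewrite /f; case: insubP => [i _ <-|]; last first.
  by rewrite -leqNgt => j_ge; rewrite !nth_default // (eqP tk).
by have -> := congr1 (fun l => nth x0 l i) Ep; rewrite nth_mktuple (tnth_nth x0).
Qed.

Lemma Kgraph_iso_of_perm n s t : sumn s + 1 = n -> sumn t + 1 = n ->
  perm_eq s t -> graph_iso (Kgraph n s) (Kgraph n t).
Proof.
move=> sn tn st; have [f [g fK gK] nth_st] := perm_eq_nth_bij 0 st.
pose pi c := if c is j.+1 then (f j).+1 else 0.
have [h [h_bij h_iso]] : graph_iso (label_graph (fun u : 'I_n => part_label s u))
                                  (label_graph (fun u : 'I_n => part_label t u)).
  apply: (@label_graph_iso _ _ _ pi) => //.
    by exists (fun c => if c is j.+1 then (g j).+1 else 0) => -[|j] /=; rewrite ?fK ?gK.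
  by move=> [|j]; rewrite !card_part_label //= nth_st.
by exists h; split=> // u v; rewrite !Kgraph_label.
Qed.

Local Open Scope ring_scope.

Section SelectionMatrices.
Variable R : comNzRingType.

Definition sel_mx m p (f : 'I_m -> 'I_p) : 'M[R]_(m, p) :=
  \matrix_(u, j) (f u == j)%:R.

Lemma mul_sel_mx m p q (f : 'I_m -> 'I_p) (M : 'M[R]_(p, q)) :
  sel_mx f *m M = \matrix_(u, l) M (f u) l.
Proof.
apply/matrixP => u l; rewrite !mxE (bigD1 (f u)) //= mxE eqxx mul1r big1 ?addr0 //.
by move=> j /negbTE; rewrite mxE eq_sym => ->; rewrite mul0r.
Qed.

Lemma sel_mx_conj m p (f g : 'I_m -> 'I_p) (M : 'M[R]_p) :
  sel_mx f *m M *m (sel_mx g)^T = \matrix_(u, v) M (f u) (g v).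
Proof.
rewrite mul_sel_mx -[_ *m _^T]trmxK trmx_mul trmxK mul_sel_mx.
by apply/matrixP => u v; rewrite !mxE.
Qed.

Lemma tr_sel_mx_mul m p (f : 'I_m -> 'I_p) :
  (sel_mx f)^T *m sel_mx f = diag_mx (\row_j #|[pred u | f u == j]|%:R).
Proof.
apply/matrixP => i j; rewrite !mxE.
have [<-|ij] := eqVneq i j; rewrite ?mulr1n ?mulr0n.
  rewrite -sumr_const [RHS]big_mkcond /=; apply: eq_bigr => u _.
  by rewrite !mxE inE; case: (f u == i); rewrite ?mulr1 ?mul0r.
apply: big1 => u _; rewrite !mxE; have [fu|] := eqVneq (f u) i; last by rewrite mul0r.
by rewrite fu (negbTE ij) mulr0.
Qed.

End SelectionMatrices.
Arguments sel_mx {R m p}.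

Section Determinants.
Variable R : comNzRingType.

Lemma det_mx22 (A : 'M[R]_2) : \det A = A 0 0 * A 1 1 - A 0 1 * A 1 0.
Proof.
rewrite (expand_det_row _ ord0) !big_ord_recl big_ord0 addr0 /cofactor !det_mx11 !mxE /=.
have -> : lift ord0 (0 : 'I_1) = 1 :> 'I_2 by apply/val_inj.
have -> : lift 1 (0 : 'I_1) = 0 :> 'I_2 by apply/val_inj.
by rewrite expr0 expr1 !mul1r mulN1r; ring.
Qed.

Lemma det_scalar_sub_mulmxC N r (a : R) (U : 'M[R]_(N, r)) (V : 'M[R]_(r, N)) :
  a ^+ r * \det (a%:M - U *m V) = a ^+ N * \det (a%:M - V *m U).
Proof.
pose M := block_mx (a%:M : 'M_N) U V 1%:M.
have M_lu : M = block_mx 1%:M U 0 1%:M *m block_mx (a%:M - U *m V) 0 V 1%:M.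
  rewrite mulmx_block !mul1mx !mul0mx !mulmx1 subrK.
  by rewrite /M; congr block_mx; apply/matrixP=> i j; rewrite !mxE add0r.
have M_ul : block_mx 1%:M 0 (- V) a%:M *m M = block_mx a%:M U 0 (a%:M - V *m U).
  rewrite mulmx_block !mul1mx !mul0mx !mulmx1 !mulNmx mul_mx_scalar mul_scalar_mx addNr.
  by congr block_mx; apply/matrixP=> i j; rewrite !mxE ?add0r ?addr0 // addrC.
have := congr1 determinant M_ul.
rewrite det_mulmx det_lblock det_ublock !det_scalar expr1n mul1r => <-.
by rewrite M_lu det_mulmx det_ublock det_lblock !det_scalar !expr1n !mul1r mulr1.
Qed.

End Determinants.

Lemma det_diag_sub_mulmx (F : fieldType) N r (d : 'I_N -> F)
    (U : 'M[F]_(N, r)) (V : 'M[F]_(r, N)) : (forall i, d i != 0) ->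
  \det (diag_mx (\row_i d i) - U *m V) =
  (\prod_i d i) * \det (1%:M - V *m diag_mx (\row_i (d i)^-1) *m U).
Proof.
move=> d_neq0; set D' := diag_mx (\row_i (d i)^-1).
have dD : diag_mx (\row_i d i) *m D' = 1%:M.
  by apply/matrixP => i j; rewrite mulmx_diag !mxE mulfV.
have -> : diag_mx (\row_i d i) - U *m V = diag_mx (\row_i d i) *m (1%:M - D' *m U *m V).
  by rewrite mulmxBr mulmx1 !mulmxA dD mul1mx.
rewrite det_mulmx det_diag; congr (_ * _); first by apply: eq_bigr => i; rewrite mxE.
by have := det_scalar_sub_mulmxC 1 (D' *m U) V; rewrite !expr1n !mul1r mulmxA.
Qed.

Section QuotientMatrix.
Variables (F : fieldType) (k : nat).

Definition quotient_mx : 'M[F]_k.+1 :=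
  \matrix_(i, j) (if [|| i == ord0, j == ord0 | i == j] then 1 else 2).

Lemma det_quotient_mx (al : F) (m : 'I_k.+1 -> F) :
  al != 0 -> m ord0 = 1 -> (forall j, al + m (lift ord0 j) != 0) ->
  \det (al%:M - quotient_mx *m diag_mx (\row_j m j)) =
  (\prod_(j < k) (al + m (lift ord0 j))) *
  (al - 1 - (al *+ 2 - 1) * \sum_(j < k) m (lift ord0 j) / (al + m (lift ord0 j))).
Proof.
move=> al_neq0 m0 al_m_neq0.
set sg := \sum_(j < k) _.
pose w (i : 'I_k.+1) : F := (i != ord0)%:R.
pose d i := al + w i * m i.
pose U : 'M_(k.+1, 2) := \matrix_(i, c) (if c == 0 then 1 else w i).
pose V : 'M_(2, k.+1) := \matrix_(c, j) (if c == 0 then m j else w j * m j).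
have w0 : w ord0 = 0 by rewrite /w eqxx.
have w_lift j : w (lift ord0 j) = 1 by rewrite /w eq_sym neq_lift.
have d0 : d ord0 = al by rewrite /d w0 mul0r addr0.
have d_lift j : d (lift ord0 j) = al + m (lift ord0 j) by rewrite /d w_lift mul1r.
have d_neq0 i : d i != 0 by case: (unliftP ord0 i) => [j|] ->; rewrite ?d0 ?d_lift.
(* quotient_mx = J + w w^T - diag w is a rank-two perturbation of a diagonal. *)
have -> : al%:M - quotient_mx *m diag_mx (\row_j m j) = diag_mx (\row_i d i) - U *m V.
  apply/matrixP => i j; rewrite mul_mx_diag !mxE !big_ord_recl big_ord0 !mxE /= /d /w.
  case: (eqVneq i j) => [<-|ij]; case: (eqVneq i ord0) => [->|i0] /=;
    rewrite ?eqxx ?mulr1n ?mulr0n ?(negbTE ij) //=; try ring.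
  by case: (eqVneq j ord0) => [->|j0] /=; ring.
have W (a b : 'I_2) : (1%:M - V *m diag_mx (\row_i (d i)^-1) *m U) a b =
    (a == b)%:R - (((a == 0) && (b == 0))%:R / al + sg).
  rewrite mul_mx_diag !mxE big_ord_recl !mxE w0 d0 m0; congr (_ - (_ + _)).
    by case: (a == 0); case: (b == 0); rewrite /= ?mulr1 ?mul1r ?mulr0 ?mul0r.
  apply: eq_bigr => j _; rewrite !mxE w_lift d_lift.
  by case: (a == 0); case: (b == 0); rewrite ?mul1r ?mulr1.
rewrite det_diag_sub_mulmx // det_mx22 !W big_ord_recl d0 /=.
have -> : \prod_(j < k) d (lift ord0 j) = \prod_(j < k) (al + m (lift ord0 j)).
  by apply: eq_bigr => j _; rewrite d_lift.
by field.
Qed.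

End QuotientMatrix.
Arguments quotient_mx {F} k.

Lemma dist_mx_Kgraph (n : nat) s : sumn s + 1 = n -> (1 < n)%N ->
  dist_mx (Kgraph n s) =
  sel_mx (label_ord s) *m quotient_mx (size s) *m (sel_mx (label_ord s))^T - 1%:M.
Proof.
move=> sn n_gt1; have n_gt0 : (0 < n)%N by apply: ltnW.
have dom (v : 'I_n) : v != Ordinal n_gt0 ->
    Kgraph n s (Ordinal n_gt0) v && Kgraph n s v (Ordinal n_gt0).
  by move=> v0; rewrite /Kgraph eq_sym v0 /= !orbT.
have lab0 (u : 'I_n) : (label_ord s u == ord0) = (part_label s u == 0)%N.
  by rewrite -(inj_eq val_inj) label_ordE.
have labE (u v : 'I_n) :
    (label_ord s u == label_ord s v) = (part_label s u == part_label s v).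
  by rewrite -(inj_eq val_inj) !label_ordE.
apply/matrixP => u v; rewrite sel_mx_conj !mxE (gdist_dominating dom) ?card_ord //.
rewrite Kgraph_label /label_graph !lab0 labE.
by case: (eqVneq u v) => [<-|uv] /=; [rewrite eqxx !orbT subrr | case: ifP; rewrite subr0].
Qed.

Lemma horner_char_poly (R : comNzRingType) n (A : 'M[R]_n) x :
  (char_poly A).[x] = \det (x%:M - A).
Proof.
rewrite /char_poly -horner_evalE -det_map_mx; congr determinant.
apply/matrixP => i j; rewrite !mxE.
by rewrite rmorphB rmorphMn /= !horner_evalE hornerX hornerC.
Qed.

Lemma card_label_ord (n : nat) s (j : 'I_(size s).+1) : sumn s + 1 = n ->
  #|[pred u : 'I_n | label_ord s u == j]| = #|[pred u : 'I_n | part_label s u == j]|.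
Proof. by move=> sn; apply: eq_card => u; rewrite !inE -(inj_eq val_inj) label_ordE. Qed.

Lemma horner_char_Kgraph (n : nat) s (x : algC) :
  sumn s + 1 = n -> (1 < n)%N -> (size s < n)%N ->
  x + 1 != 0 -> (forall a, a \in s -> x + 1 + a%:R != 0) ->
  (char_poly (dist_mx (Kgraph n s))).[x] = (x + 1) ^+ (n - (size s).+1) *
    (\prod_(a <- s) (x + 1 + a%:R) *
     (x - (x *+ 2 + 1) * \sum_(a <- s) a%:R / (x + 1 + a%:R))).
Proof.
move=> sn n_gt1 k_lt_n x1_neq0 xa_neq0.
rewrite horner_char_poly dist_mx_Kgraph //.
set R := sel_mx (label_ord s); set K := quotient_mx (size s).
pose m j : algC := #|[pred u : 'I_n | label_ord s u == j]|%:R.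
have m0 : m ord0 = 1 by rewrite /m card_label_ord // card_part_label.
have m_lift j : m (lift ord0 j) = (nth 0%N s j)%:R.
  by rewrite /m card_label_ord // card_part_label.
have -> : x%:M - (R *m K *m R^T - 1%:M) = (x + 1)%:M - R *m (K *m R^T).
  by apply/matrixP => i j; rewrite mulmxA !mxE; case: (i == j); rewrite /= ?mulr1n ?mulr0n; ring.
have := det_scalar_sub_mulmxC (x + 1) R (K *m R^T).
have RR : R^T *m R = diag_mx (\row_j m j) by exact: tr_sel_mx_mul.
rewrite -[K *m R^T *m R]mulmxA RR det_quotient_mx ?m0 //; last first.
  by move=> j; rewrite m_lift; apply: xa_neq0; rewrite mem_nth.
have -> : \prod_(j < size s) (x + 1 + m (lift ord0 j)) = \prod_(a <- s) (x + 1 + a%:R).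
  by rewrite (big_nth 0%N) big_mkord; apply: eq_bigr => j _; rewrite m_lift.
have -> : \sum_(j < size s) m (lift ord0 j) / (x + 1 + m (lift ord0 j)) =
          \sum_(a <- s) a%:R / (x + 1 + a%:R).
  by rewrite (big_nth 0%N) big_mkord; apply: eq_bigr => j _; rewrite m_lift.
move=> E; apply: (mulfI (expf_neq0 (size s).+1 x1_neq0)).
rewrite E [RHS]mulrA -exprD subnKC // addrK; congr (_ * (_ * (_ - _ * _))); ring.
Qed.

Lemma poly_eq_at_nat (R : numDomainType) (p q : {poly R}) :
  (forall i : nat, p.[i%:R] = q.[i%:R]) -> p = q.
Proof.
move=> pq; apply/eqP; rewrite -subr_eq0; apply/eqP.
apply: (@roots_geq_poly_eq0 _ _ [seq i%:R | i <- iota 0 (size (p - q))]).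
- by apply/allP => _ /mapP [i _ ->]; rewrite /root hornerD hornerN pq subrr.
- by rewrite map_inj_uniq ?iota_uniq // => i j /eqP; rewrite eqr_nat => /eqP.
- by rewrite size_map size_iota.
Qed.

Lemma expXsubC_mul_inj (F : fieldType) (c : F) (a b : nat) (p q : {poly F}) :
  ~~ root p c -> ~~ root q c ->
  ('X - c%:P) ^+ a * p = ('X - c%:P) ^+ b * q -> a = b /\ p = q.
Proof.
move=> pc qc E; have ab : a = b.
  by move: (congr1 (mup c) E); rewrite !mupMl // !mup_XsubCX eqxx.
split=> //; move: E; rewrite ab; apply: mulfI.
by rewrite expf_neq0 // polyXsubC_eq0.
Qed.

Section DistancePolynomial.
Variable R : numFieldType.

Definition blocks_poly (s : seq nat) : {poly R} := \prod_(a <- s) ('X + (a.+1)%:R%:P).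

Definition dist_op (k : nat) (q : {poly R}) : {poly R} :=
  'X * q - ('X *+ 2 + 1) * (k%:R *: q - ('X + 1) * q^`()).

Lemma horner_blocks_poly s x : (blocks_poly s).[x] = \prod_(a <- s) (x + 1 + a%:R).
Proof.
rewrite /blocks_poly horner_prod; apply: eq_bigr => a _.
by rewrite hornerD hornerX hornerC -natr1 addrA addrAC.
Qed.

Lemma horner_blocks_poly_deriv s x : (forall a, a \in s -> x + 1 + a%:R != 0) ->
  ((size s)%:R *: blocks_poly s - ('X + 1) * (blocks_poly s)^`()).[x] =
  (blocks_poly s).[x] * \sum_(a <- s) a%:R / (x + 1 + a%:R).
Proof.
elim: s => [|a s IH] xs_neq0.
  by rewrite /blocks_poly !big_nil derivC mulr0 subr0 scale0r horner0 mulr0.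
have xa_neq0 : x + 1 + a%:R != 0 by apply: xs_neq0; rewrite mem_head.
have {IH} := IH (fun b bs => xs_neq0 b (mem_behead (s := a :: s) bs)).
rewrite /blocks_poly big_cons -/(blocks_poly s) derivM derivD derivX derivC addr0 mul1r.
rewrite !(hornerD, hornerN, hornerZ, hornerM, hornerX, hornerC) big_cons /=.
set Q := (blocks_poly s).[x]; set D := (blocks_poly s)^`().[x]; set S := \sum_(b <- s) _.
move=> IH; rewrite -!natr1.
transitivity ((x + 1 + a%:R) * ((size s)%:R * Q - (x + 1) * D) + a%:R * Q); first by ring.
by rewrite IH; field.
Qed.

Lemma horner_dist_op_blocks s x : (forall a, a \in s -> x + 1 + a%:R != 0) ->
  (dist_op (size s) (blocks_poly s)).[x] = \prod_(a <- s) (x + 1 + a%:R) *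
    (x - (x *+ 2 + 1) * \sum_(a <- s) a%:R / (x + 1 + a%:R)).
Proof.
move=> xs_neq0; rewrite /dist_op hornerD hornerN hornerM [in X in _ - X]hornerM.
rewrite horner_blocks_poly_deriv //.
rewrite horner_blocks_poly hornerD hornerMn hornerX hornerC; ring.
Qed.

Lemma horner_dist_op_N1 k q : (dist_op k q).[-1] = (k%:R - 1) * q.[-1].
Proof.
rewrite /dist_op !(hornerD, hornerN, hornerM, hornerZ, hornerMn, hornerX, hornerC).
by rewrite addNr mul0r subr0; ring.
Qed.

Lemma dist_opB k p q : dist_op k (p - q) = dist_op k p - dist_op k q.
Proof. by rewrite /dist_op derivB scalerBr; ring. Qed.

Lemma coef_dist_op_size k (q : {poly R}) m : size q = m.+1 ->
  (dist_op k q)`_m.+1 = q`_m * ((m.*2.+1)%:R - (k.*2)%:R).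
Proof.
move=> sq; have q_hi j : (m < j)%N -> q`_j = 0 by move=> mj; rewrite nth_default // sq.
rewrite /dist_op mulrDl mul1r mulrnAl mulrDl mul1r.
rewrite !(coefB, coefD, coefMn, coefXM, coefZ, coef_deriv) /= (q_hi m.+1) ?(q_hi m.+2) // !mul0rn mulr0.
have -> : (if m == 0%N then 0 else q`_m.-1.+1 *+ m.-1.+1) = q`_m *+ m by case: (m).
by rewrite -mulr_natr -!muln2 -natr1 !natrM; ring.
Qed.

Lemma dist_op_eq0 k q : dist_op k q = 0 -> q = 0.
Proof.
move=> Dq; apply/eqP; apply: contraT => q_neq0.
have [m sq] : exists m, size q = m.+1 by exists (size q).-1; rewrite prednK // size_poly_gt0.
have /esym/eqP := coef_dist_op_size k sq; rewrite Dq coef0 mulf_eq0 subr_eq0 eqr_nat.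
case/orP => [|/eqP/(congr1 odd)]; last by rewrite /= !odd_double.
by rewrite -[m]/(m.+1.-1) -sq -lead_coefE lead_coef_eq0 (negbTE q_neq0).
Qed.

Lemma dist_op_inj k : injective (dist_op k).
Proof.
move=> p q /eqP; rewrite -subr_eq0 -dist_opB => /eqP /dist_op_eq0 /eqP.
by rewrite subr_eq0 => /eqP.
Qed.

Lemma blocks_poly_monic s : blocks_poly s \is monic.
Proof. by apply: monic_prod => a _; apply: monicXaddC. Qed.

Lemma mup_blocks_poly s a : mup (- (a.+1)%:R) (blocks_poly s) = count_mem a s.
Proof.
elim: s => [|b s IH] /=.
  by rewrite /blocks_poly big_nil mupNroot // /root hornerC oner_eq0.
rewrite /blocks_poly big_cons -/(blocks_poly s) mupM ?monic_neq0 ?monicXaddC ?blocks_poly_monic //.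
by rewrite IH -[(b.+1)%:R]opprK polyCN -[_ - _]expr1 mup_XsubCX eqr_opp eqr_nat eqSS.
Qed.

Lemma blocks_poly_inj s t : blocks_poly s = blocks_poly t -> perm_eq s t.
Proof. by move=> st; apply/allP => a _; apply/eqP; rewrite -!mup_blocks_poly st. Qed.

End DistancePolynomial.
Arguments blocks_poly {R} s.
Arguments dist_op {R} k q.

Lemma char_poly_Kgraph (n : nat) s : sumn s + 1 = n -> (1 < n)%N -> (size s < n)%N ->
  char_poly (dist_mx (Kgraph n s)) =
  ('X + 1) ^+ (n - (size s).+1) * dist_op (size s) (blocks_poly s).
Proof.
move=> sn n_gt1 k_lt_n; apply: poly_eq_at_nat => i.
have i1_neq0 : i%:R + 1 != 0 :> algC by rewrite natr1 pnatr_eq0.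
have ia_neq0 a : a \in s -> i%:R + 1 + a%:R != 0 :> algC.
  by rewrite natr1 -natrD pnatr_eq0.
rewrite horner_char_Kgraph // hornerM horner_exp hornerD hornerX hornerC.
by rewrite horner_dist_op_blocks.
Qed.

Lemma nroot_dist_op_blocksN1 s : (2 <= size s)%N -> all (fun x => 0 < x)%N s ->
  ~~ root (dist_op (size s) (blocks_poly s)) (-1 : algC).
Proof.
move=> s_ge2 s_pos; rewrite /root horner_dist_op_N1 horner_blocks_poly mulf_eq0 negb_or.
rewrite subr_eq0 pnatr_eq1 -(subnKC s_ge2) /= prodf_seq_neq0.
by apply/allP => a /(allP s_pos) a_gt0; rewrite addNr add0r pnatr_eq0 -lt0n.
Qed.

Theorem theorem3p5 (n : nat) (s t : seq nat) :
  valid_parts n s -> valid_parts n t ->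
  D_cospectral (Kgraph n s) (Kgraph n t) ->
  graph_iso (Kgraph n s) (Kgraph n t).
Proof.
case=> s_ge2 s_pos sn [t_ge2 t_pos tn]; rewrite /D_cospectral.
have := size_le_sumn s_pos; have := size_le_sumn t_pos => t_le s_le.
rewrite !char_poly_Kgraph //; try lia.
have -> : 'X + 1 = 'X - (-1)%:P :> {poly algC} by rewrite polyCN opprK.
case/expXsubC_mul_inj; rewrite ?nroot_dist_op_blocksN1 // => e_pow.
have -> : size s = size t by lia.
by move/dist_op_inj/blocks_poly_inj; apply: Kgraph_iso_of_perm.
Qed.
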